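(* Let $G$ be a finite group and $n = \exp(G)$. Suppose the Galois group $\mathrm{Gal}(\mathbb{Q}_n:\mathbb{Q})$ acts on the set of conjugacy classes of $G$ moving exactly four classes, and its image as a group of permutations of these four classes is the Klein four-group $K = \{1,(12)(34),(13)(24),(14)(23)\}$. Let $\mathscr{D} = \{x, x^a, x^b, x^{ab}\}$ (with $a,b$ integers) be a complete set of representatives of the four classes moved by $K$, let $\sigma \in \mathrm{Gal}(\mathbb{Q}_n:\mathbb{Q})$ be such that $\sigma\cdot x = x^a$ (up to conjugacy), and let $\chi \in \mathrm{Irr}(G)$ satisfy $\chi \ne \sigma\chi$. Then $$|C_G(x)| = |\chi(x) - \chi(x^a)|^2 + |\chi(x^b) - \chi(x^{ab})|^2.$$
   Context: $\exp(G)$ is the exponent of $G$; $\mathbb{Q}_n=\mathbb{Q}(\zeta)$ with $\zeta$ a primitive $n$-th root of unity. For $\sigma\in\mathrm{Gal}(\mathbb{Q}_n:\mathbb{Q})$ with $\sigma(\zeta)=\zeta^{r}$ ($r$ coprime to $n$), $\sigma$ acts on the complex irreducible characters $\mathrm{Irr}(G)$ by $(\sigma\chi)(g)=\sigma(\chi(g))$ and on conjugacy classes by $\sigma\cdot x^G=(x^{r})^G$; then $(\sigma\chi)(x)=\chi(\sigma\cdot x)$. *)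

From HB Require Import structures.
From mathcomp Require Import all_boot all_order all_algebra all_fingroup all_solvable all_field all_character.
Set Implicit Arguments. Unset Strict Implicit. Unset Printing Implicit Defensive.
Import Order.TTheory GRing.Theory Num.Theory.

Local Open Scope group_scope.

Definition zexpg (gT : finGroupType) (x : gT) (a : int) : gT :=
  match a with
  | Posz k => x ^+ k
  | Negz k => x ^- k.+1
  end.

(* Action of the Galois automorphism sigma_r : zeta |-> zeta^r of Q_n
   on a conjugacy class C of G:  sigma_r . x^G = (x^r)^G. *)
Definition galclass (gT : finGroupType) (G : {set gT}) (r : nat) (C : {set gT}) :
  {set gT} := (repr C ^+ r) ^: G.

(* C is a conjugacy class of G moved by some element of Gal(Q_n : Q),
   n = exp(G), Gal(Q_n:Q) being parametrised by the r coprime to n. *)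
Definition gal_moved (gT : finGroupType) (G : {group gT}) (C : {set gT}) : Prop :=
  C \in classes G /\
  exists r : nat, coprime r (exponent G) /\ galclass G r C <> C.

(* The Klein four-group {1,(12)(34),(13)(24),(14)(23)} as maps on 'I_4
   (points 1,2,3,4 are labelled 0,1,2,3). *)
Definition kf (s : seq nat) : {ffun 'I_4 -> 'I_4} :=
  [ffun i : 'I_4 => inord (nth 0%N s i)].

Definition klein4 : seq {ffun 'I_4 -> 'I_4} :=
  [:: kf [:: 0; 1; 2; 3]%N; kf [:: 1; 0; 3; 2]%N;
      kf [:: 2; 3; 0; 1]%N; kf [:: 3; 2; 1; 0]%N].

(* The Galois group moves exactly four classes, and under a labelling c of
   these four classes its image in Sym(moved classes) is exactly klein4. *)
Definition gal_image_klein (gT : finGroupType) (G : {group gT}) : Prop :=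
  exists c : 'I_4 -> {set gT},
    injective c /\
    (forall C, gal_moved G C <-> exists i, C = c i) /\
    (forall r, coprime r (exponent G) ->
       exists2 p, p \in klein4 & forall i, galclass G r (c i) = c (p i)) /\
    (forall p, p \in klein4 ->
       exists r, coprime r (exponent G) /\ forall i, galclass G r (c i) = c (p i)).

From HB Require Import structures.
From mathcomp Require Import all_boot all_order all_algebra all_fingroup all_solvable all_field all_character.
From mathcomp Require Import ring.
Import Order.TTheory GRing.Theory Num.Theory.
Set Implicit Arguments. Unset Strict Implicit. Unset Printing Implicit Defensive.

(* Since the Klein four-group has exponent 2, sigma^2 fixes every class; hence
   sigma acts as an involution both on Irr(G) and on the classes, and by
   Brauer's permutation lemma (the character table conjugates one permutation
   matrix into the other) it moves as many characters as classes, i.e. at most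
   four.  The moved characters are thus chi, sigma chi and at most one further
   pair psi, sigma psi.  The functions A = chi |-> chi(x) - chi(x^a) and
   B = chi |-> chi(x^b) - chi(x^ab) change sign under sigma, so they vanish on
   the characters fixed by sigma.  The four classes are Galois conjugate, so
   their centralizers all have order c = |C_G(x)|, and second orthogonality
   says that the rows (A chi, A psi) and (B chi, B psi) are orthogonal of
   squared norm c.  The 2x2 matrix they form is then sqrt(c) times a unitary
   matrix, so its first column (A chi, B chi) also has squared norm c. *)

Section GroupElements.
Variable gT : finGroupType.
Implicit Types (x y : gT) (G : {group gT}).
Local Open Scope group_scope.

Lemma zexpgNn x n : zexpg x (- n%:Z) = (x ^+ n)^-1.
Proof. by case: n => [|n] //=; rewrite expg0 invg1. Qed.

Lemma zexpgM x (a b : int) : zexpg (zexpg x a) b = zexpg x (a * b).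
Proof.
case: a => m; case: b => k.
- by rewrite -PoszM /= -expgM.
- by rewrite NegzE mulrN -PoszM !zexpgNn /= -expgM.
- by rewrite NegzE mulNr -PoszM !zexpgNn /= expgVn -expgM.
- by rewrite !NegzE mulrNN -PoszM !zexpgNn /= expgVn invgK -expgM.
Qed.

Lemma zexpgJ x (a : int) y : zexpg (x ^ y) a = zexpg x a ^ y.
Proof. by case: a => k /=; rewrite ?conjXg ?conjVg ?conjXg. Qed.

Lemma zexpgXr x (a : int) n : zexpg (x ^+ n) a = zexpg x a ^+ n.
Proof. by case: a => k /=; rewrite -!expgM mulnC // expgVn -!expgM mulnC. Qed.

Lemma groupZexpg G x (a : int) : x \in G -> zexpg x a \in G.
Proof. by case: a => k Gx /=; rewrite ?groupV groupX. Qed.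

Lemma class_zexpg G x y (a : int) :
  x ^: G = y ^: G -> zexpg x a ^: G = zexpg y a ^: G.
Proof.
by move/class_eqP=> /imsetP[g Gg ->]; apply/class_eqP; rewrite zexpgJ memJ_class.
Qed.

Lemma class_expg G x y n : x ^: G = y ^: G -> (x ^+ n) ^: G = (y ^+ n) ^: G.
Proof. exact: class_zexpg (Posz n). Qed.

Lemma card_cent1_class G x y : y \in x ^: G -> #|'C_G[y]| = #|'C_G[x]|.
Proof. by case/imsetP=> g Gg ->; rewrite cent1J -{1}(conjGid Gg) -conjIg cardJg. Qed.

Lemma cent1X_coprime x m : coprime m #[x] -> 'C[x ^+ m] = 'C[x].
Proof.
by rewrite coprime_sym -generator_coprime => /eqP genx; rewrite -!cent_cycle -genx.
Qed.

Lemma card_cent1_classX_coprime G x y m : x \in G -> coprime m (exponent G) ->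
  y \in (x ^+ m) ^: G -> #|'C_G[y]| = #|'C_G[x]|.
Proof.
move=> Gx cop /card_cent1_class->; rewrite cent1X_coprime //.
exact: coprime_dvdr (dvdn_exponent Gx) cop.
Qed.

Lemma galclassE G r x : x \in G -> galclass G r (x ^: G) = (x ^+ r) ^: G.
Proof.
rewrite /galclass => Gx; have /imsetP[g Gg ->] := mem_repr x (class_refl G x).
by rewrite -conjXg classGidl.
Qed.

Lemma galclass_classes G r C : C \in classes G -> galclass G r C \in classes G.
Proof. by case/repr_classesP=> GC _; rewrite /galclass mem_classes ?groupX. Qed.

End GroupElements.

Lemma klein4_involutive p : p \in klein4 -> involutive p.
Proof.
rewrite !inE => /or4P[]/eqP-> l; apply/val_inj;
  case: l => [[|[|[|[|l]]]] Hl] //=; rewrite !ffunE /= ?inordK //=.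
Qed.

Lemma klein4_transitive (k l : 'I_4) : exists2 p, p \in klein4 & p k = l.
Proof.
suff /hasP[p Kp /eqP pk] : has (fun p : {ffun 'I_4 -> 'I_4} => p k == l) klein4 by exists p.
case: k => [[|[|[|[|k]]]] Hk] //; case: l => [[|[|[|[|l]]]] Hl] //;
  rewrite /= !ffunE /= -!(inj_eq val_inj) /= ?inordK //.
Qed.

Lemma gal_moved_galclass (gT : finGroupType) (G : {group gT}) r C :
  C \in classes G -> coprime r (exponent G) -> galclass G r C != C -> gal_moved G C.
Proof. by move=> CG cop movedC; split=> //; exists r; split=> //; apply/eqP. Qed.

Section KleinImage.
Variables (gT : finGroupType) (G : {group gT}).
Hypothesis KG : gal_image_klein G.

Lemma gal_image_klein_galclassK r : coprime r (exponent G) ->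
  forall C, C \in classes G -> galclass G r (galclass G r C) = C.
Proof.
move=> cop C CG; have [fixC | movedC] := eqVneq (galclass G r C) C; first by rewrite !fixC.
have [c [_ [movc [galK _]]]] := KG.
have [k ->] := (movc C).1 (gal_moved_galclass CG cop movedC).
by have [p /klein4_involutive pK cp] := galK r cop; rewrite !cp pK.
Qed.

Lemma gal_image_klein_transitive C D : gal_moved G C -> gal_moved G D ->
  exists2 r, coprime r (exponent G) & galclass G r C = D.
Proof.
have [c [_ [movc [_ galK]]]] := KG.
move=> /movc[k ->] /movc[l ->]; have [p Kp pk] := klein4_transitive k l.
by have [r [cop cp]] := galK p Kp; exists r; rewrite // cp pk.
Qed.

Lemma gal_image_klein_card_moved r : coprime r (exponent G) ->
  #|[set C in classes G | galclass G r C != C]| <= 4.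
Proof.
have [c [_ [movc _]]] := KG.
move=> cop; rewrite -[4]card_ord -cardsT; apply: leq_trans (leq_imset_card c _).
apply/subset_leq_card/subsetP => C; rewrite inE => /andP[CG movedC].
have [k ->] := (movc C).1 (gal_moved_galclass CG cop movedC).
exact: imset_f (in_setT k).
Qed.

End KleinImage.

Local Open Scope ring_scope.

Lemma cfun_classE (gT : finGroupType) (G : {group gT}) (phi : 'CF(G)) x y :
  (x ^: G = y ^: G)%g -> phi x = phi y.
Proof. by move=> xy; rewrite -cfun_repr xy cfun_repr. Qed.

Lemma cfAut_char_expg (gT : finGroupType) (G : {group gT})
    (u : {rmorphism algC -> algC}) r (chi : 'CF(G)) g :
  (forall z : algC, z ^+ exponent G = 1 -> u z = z ^+ r) ->
  chi \is a character -> g \in G -> u (chi g) = chi (g ^+ r)%g.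
Proof.
move=> u_r Nchi Gg; have sgG : (<[g]> \subset G)%g by rewrite cycle_subG.
have [gg grg] : g \in <[g]>%g /\ (g ^+ r)%g \in <[g]>%g by rewrite mem_cycle cycle_id.
(* On <[g]>, chi is a combination with natural coefficients of linear
   characters, whose values at g are exp(G)-th roots of unity. *)
rewrite -(cfResE chi sgG gg) -(cfResE chi sgG grg).
rewrite (cfun_sum_cfdot ('Res[<[g]>%G] chi)).
rewrite !sum_cfunE rmorph_sum; apply: eq_bigr => j _; rewrite !cfunE rmorphM /=.
have lin_j : 'chi[<[g]>%G]_j \is a linear_char by rewrite irr_cyclic_lin ?cycle_cyclic.
rewrite aut_natr ?Cnat_cfdot_char_irr ?cfRes_char // lin_charX // u_r //.
by rewrite -lin_charX // expg_exponent // lin_char1.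
Qed.

Lemma mxtrace_perm (R : nzRingType) n (s : 'S_n) :
  \tr (perm_mx s : 'M[R]_n) = #|[pred i | s i == i]|%:R.
Proof.
rewrite /mxtrace -sum1_card natr_sum [RHS]big_mkcond /=; apply: eq_bigr => i _.
by rewrite !mxE inE; case: (s i == i).
Qed.

Lemma card_fix_row_col_perm (R : numFieldType) n (X : 'M[R]_n) (s t : 'S_n) :
  X \in unitmx -> (forall i j, X (s i) j = X i (t j)) ->
  #|[pred i | s i == i]| = #|[pred j | t j == j]|.
Proof.
move=> uX Xst; have PX : perm_mx s *m X = X *m perm_mx t^-1.
  by rewrite -row_permE -col_permE; apply/matrixP => i j; rewrite !mxE Xst.
have /eqP : \tr (perm_mx s : 'M[R]_n) = \tr (perm_mx t^-1 : 'M[R]_n).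
  by rewrite -[perm_mx s](mulmxK uX) PX mxtrace_mulC mulmxA mulVmx // mul1mx.
rewrite !mxtrace_perm eqr_nat => /eqP->; apply: eq_card => j.
by rewrite !inE (canF_eq (permKV t)) eq_sym.
Qed.

Lemma card_moved_Iirr_classes (gT : finGroupType) (G : {group gT})
    (f q : Iirr G -> Iirr G) :
  injective f -> injective q ->
  (forall j k, character_table G (f j) k = character_table G j (q k)) ->
  #|[pred j | f j != j]| = #|[pred k | q k != k]|.
Proof.
move=> f_inj q_inj fq.
have movedE (h : Iirr G -> Iirr G) :
    #|[pred j | h j != j]| = (#|Iirr G| - #|[pred j | h j == j]|)%N.
  by rewrite -(cardC [pred j | h j == j]) addKn; apply: eq_card.
have fixE (h : Iirr G -> Iirr G) (h_inj : injective h) :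
    #|[pred j | h j == j]| = #|[pred j | perm h_inj j == j]|.
  by apply: eq_card => j; rewrite !inE permE.
rewrite !movedE (fixE _ f_inj) (fixE _ q_inj); congr (_ - _)%N.
by apply: card_fix_row_col_perm (character_table_unit G) _ => j k; rewrite !permE.
Qed.

(* The fixed point [j0] serves as [k] when [i] lies in the only moved orbit. *)
Lemma sum_involution_moved_le4 (R : zmodType) (I : finType) (f : I -> I) (i j0 : I) :
  involutive f -> f j0 = j0 -> (#|[pred j | f j != j]| <= 4)%N -> f i != i ->
  exists k, forall F : I -> R,
    (forall j, f j = j -> F j = 0) -> (forall j, F (f j) = F j) ->
    \sum_j F j = (F i + F k) *+ 2.
Proof.
move=> fK fj0 moved4 fi; have fiK : f (f i) != f i by rewrite fK eq_sym.
have sum_on s (F : I -> R) : uniq s -> (forall j, j \notin s -> F j = 0) ->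
    \sum_j F j = \sum_(j <- s) F j.
  move=> us F0; rewrite [RHS]big_uniq // [LHS](bigID (mem s)) /=.
  by rewrite [X in _ + X]big1 ?addr0.
case: (pickP [pred k | (f k != k) && (k \notin [:: i; f i])]) => [k /andP[fk] | none].
  rewrite !inE negb_or => /andP[ki kfi]; exists k => F F0 Ff.
  have uniq4 : uniq [:: i; f i; k; f k].
    rewrite /= !inE !negb_or !(eq_sym i) [f k == i](canF_eq fK) (inj_eq (can_inj fK)).
    by rewrite (eq_sym (f i) k) (eq_sym k (f k)) fi fk ki kfi eq_sym ki.
  have fixed j : j \notin [:: i; f i; k; f k] -> f j = j.
    move=> jN; apply/eqP; apply: contraTT moved4 => fj; rewrite -ltnNge.
    have uniq5 : uniq (j :: [:: i; f i; k; f k]) by rewrite cons_uniq jN.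
    apply: (@leq_trans #|j :: [:: i; f i; k; f k]|); first by rewrite (card_uniqP uniq5).
    apply/subset_leq_card/subsetP => l; rewrite !inE.
    by case/orP => [|/or4P[]] /eqP->; rewrite ?fK // eq_sym.
  rewrite (sum_on _ _ uniq4) => [|j /fixed/F0 //].
  by rewrite !big_cons big_nil !Ff addr0 mulr2n addrACA !addrA.
exists j0 => F F0 Ff.
have fixed j : j \notin [:: i; f i] -> f j = j.
  by move=> jN; apply/eqP; have := none j; rewrite /= jN andbT => /negbFE.
have uniq2 : uniq [:: i; f i] by rewrite /= inE andbT eq_sym.
rewrite (sum_on _ _ uniq2) => [|j /fixed/F0 //].
by rewrite !big_cons big_nil Ff (F0 _ fj0) !addr0 mulr2n.
Qed.

Lemma sum_irr_sub_mul_conj (gT : finGroupType) (G : {group gT}) (g1 h1 g2 h2 : gT) :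
  g2 \in G -> h2 \in G ->
  \sum_j ('chi[G]_j g1 - 'chi_j h1) * ('chi_j g2 - 'chi_j h2)^*
    = #|'C_G[g1]%g|%:R *+ (g1 ^: G == g2 ^: G)%g
      - #|'C_G[g1]%g|%:R *+ (g1 ^: G == h2 ^: G)%g
      - #|'C_G[h1]%g|%:R *+ (h1 ^: G == g2 ^: G)%g
      + #|'C_G[h1]%g|%:R *+ (h1 ^: G == h2 ^: G)%g.
Proof.
move=> Gg2 Gh2; have orth g h : h \in G ->
    \sum_j 'chi[G]_j g * ('chi_j h)^* = #|'C_G[g]%g|%:R *+ (g ^: G == h ^: G)%g.
  move=> Gh; rewrite second_orthogonality_relation //.
  by congr (_ *+ nat_of_bool _); exact: sameP class_eqP eqP.
rewrite -!orth // -!sumrB -big_split /=.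
by apply: eq_bigr => j _; rewrite rmorphB /=; ring.
Qed.

Lemma orthogonal_rows2_col_norm (C : numClosedFieldType) (n a b c d : C) :
  n != 0 -> n = `|a| ^+ 2 + `|c| ^+ 2 -> n = `|b| ^+ 2 + `|d| ^+ 2 ->
  a * b^* + c * d^* = 0 -> n = `|a| ^+ 2 + `|b| ^+ 2.
Proof.
move=> n0 nac nbd orth.
have normsE : `|a| ^+ 2 * `|b| ^+ 2 = `|c| ^+ 2 * `|d| ^+ 2.
  rewrite -!exprMn -[`|b|]norm_conjC -[`|d|]norm_conjC -!normrM.
  by move/eqP: orth; rewrite addr_eq0 => /eqP->; rewrite normrN.
have nc : n - `|a| ^+ 2 = `|c| ^+ 2 by rewrite nac addrC addKr.
have nd : n - `|b| ^+ 2 = `|d| ^+ 2 by rewrite nbd addrC addKr.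
have : (n - `|a| ^+ 2) * (n - `|b| ^+ 2) - `|a| ^+ 2 * `|b| ^+ 2
    = n * (n - (`|a| ^+ 2 + `|b| ^+ 2)) by ring.
by rewrite nc nd normsE subrr => /esym/eqP; rewrite mulf_eq0 (negbTE n0) subr_eq0 => /eqP.
Qed.

Section GaloisSwappedPairs.
Variables (gT : finGroupType) (G : {group gT}).
Variables (u : {rmorphism algC -> algC}) (r : nat).
Hypothesis u_r : forall z : algC, z ^+ exponent G = 1 -> u z = z ^+ r.
Hypothesis galclassK : forall C, C \in classes G -> galclass G r (galclass G r C) = C.
Hypothesis card_moved_classes : (#|[set C in classes G | galclass G r C != C]| <= 4)%N.
Local Notation f := (@aut_Iirr gT G u).

Lemma class_expgK g : g \in G -> ((g ^+ r ^+ r) ^: G)%g = (g ^: G)%g.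
Proof.
by move=> Gg; rewrite -galclassE ?groupX // -galclassE // galclassK ?mem_classes.
Qed.

Lemma class_expg_swap g h : g \in G -> ((g ^+ r) ^: G)%g = (h ^: G)%g ->
  ((h ^+ r) ^: G)%g = (g ^: G)%g.
Proof. by move=> Gg gh; rewrite -(class_expg r gh) class_expgK. Qed.

Lemma aut_Iirr_expg j g : g \in G -> 'chi_(f j) g = 'chi_j (g ^+ r)%g.
Proof. by move=> Gg; rewrite aut_IirrE cfunE (cfAut_char_expg u_r) ?irr_char. Qed.

Lemma aut_Iirr_involutive : involutive f.
Proof.
move=> j; apply: irr_inj; apply/cfunP => g.
have [Gg | notGg] := boolP (g \in G); last by rewrite !cfun0.
by rewrite !aut_Iirr_expg ?groupX // (cfun_classE _ (class_expgK Gg)).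
Qed.

Lemma card_moved_Iirr : (#|[pred j | f j != j]| <= 4)%N.
Proof.
pose q (k : Iirr G) := class_Iirr G (galclass G r (irr_class k)).
have qK : involutive q.
  move=> k; rewrite /q class_IirrK ?galclass_classes ?irr_classP //.
  by rewrite galclassK ?irr_classP // irr_classK.
rewrite (card_moved_Iirr_classes (can_inj aut_Iirr_involutive) (can_inj qK)); last first.
  move=> j k; have Gk : repr (irr_class k) \in G by case/repr_classesP: (irr_classP k).
  rewrite !mxE aut_Iirr_expg // /q class_IirrK ?galclass_classes ?irr_classP //.
  by rewrite /galclass cfun_repr.
apply: leq_trans card_moved_classes; rewrite -(card_imset _ (can_inj (@irr_classK _ G))).
apply/subset_leq_card/subsetP => C /imsetP[k qk ->]; rewrite inE irr_classP /=.
by apply: contra qk => /eqP qkk; rewrite /q qkk irr_classK.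
Qed.

Lemma irr_sub_aut_Iirr j g h :
  g \in G -> h \in G -> ((g ^+ r) ^: G)%g = (h ^: G)%g ->
  'chi_(f j) g - 'chi_(f j) h = - ('chi_j g - 'chi_j h).
Proof.
move=> Gg Gh gh; rewrite !aut_Iirr_expg // opprB.
by rewrite (cfun_classE _ gh) (cfun_classE _ (class_expg_swap Gg gh)).
Qed.

Theorem card_cent1_swapped_pairs (i : Iirr G) g1 h1 g2 h2 :
  g1 \in G -> h1 \in G -> g2 \in G -> h2 \in G ->
  ((g1 ^+ r) ^: G)%g = (h1 ^: G)%g -> ((g2 ^+ r) ^: G)%g = (h2 ^: G)%g ->
  uniq [:: (g1 ^: G)%g; (h1 ^: G)%g; (g2 ^: G)%g; (h2 ^: G)%g] ->
  #|'C_G[h1]%g| = #|'C_G[g1]%g| -> #|'C_G[g2]%g| = #|'C_G[g1]%g| ->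
  #|'C_G[h2]%g| = #|'C_G[g1]%g| ->
  cfAut u 'chi_i != 'chi_i ->
  #|'C_G[g1]%g|%:R = `|'chi_i g1 - 'chi_i h1| ^+ 2 + `|'chi_i g2 - 'chi_i h2| ^+ 2.
Proof.
move=> Gg1 Gh1 Gg2 Gh2 swap1 swap2 uniq_cl cent_h1 cent_g2 cent_h2 chi_moved.
pose A j := 'chi[G]_j g1 - 'chi_j h1; pose B j := 'chi[G]_j g2 - 'chi_j h2.
have Af j : A (f j) = - A j := irr_sub_aut_Iirr j Gg1 Gh1 swap1.
have Bf j : B (f j) = - B j := irr_sub_aut_Iirr j Gg2 Gh2 swap2.
have fi : f i != i by apply: contra chi_moved => /eqP fi; rewrite -aut_IirrE fi.
have [k sumE] := sum_involution_moved_le4 algC aut_Iirr_involutive (aut_Iirr0 G u)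
  card_moved_Iirr fi.
have pairE (P Q : Iirr G -> algC) :
    (forall j, P (f j) = - P j) -> (forall j, Q (f j) = - Q j) ->
    \sum_j P j * (Q j)^* = (P i * (Q i)^* + P k * (Q k)^*) *+ 2.
  move=> Pf Qf; apply: (sumE (fun j => P j * (Q j)^*)) => [j fj | j].
    by have /eqP := Pf j; rewrite fj eq_sym eqNr => /eqP->; rewrite mul0r.
  by rewrite Pf Qf rmorphN mulrNN.
move: uniq_cl; rewrite /= !inE !negb_or.
move=> /and4P[/and3P[n11 n12 n13] /andP[n22 n23] n33 _].
apply: (orthogonal_rows2_col_norm (c := A k) (d := B k) (neq0CG _)); rewrite ?normCK.
- apply: (@pmulrnI _ 2) => //; rewrite -pairE // sum_irr_sub_mul_conj // !eqxx.
  by rewrite (negbTE n11) eq_sym (negbTE n11) cent_h1 !mulr0n !mulr1n !subr0 mulr2n.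
- apply: (@pmulrnI _ 2) => //; rewrite -pairE // sum_irr_sub_mul_conj // !eqxx.
  rewrite (negbTE n33) eq_sym (negbTE n33) cent_g2 cent_h2.
  by rewrite !mulr0n !mulr1n !subr0 mulr2n.
- apply: (@pmulrnI _ 2) => //; rewrite -pairE // sum_irr_sub_mul_conj //.
  rewrite (negbTE n12) (negbTE n13) (negbTE n22) (negbTE n23).
  by rewrite !mulr0n !subr0 addr0 mul0rn.
Qed.

End GaloisSwappedPairs.

Theorem mainTheorem11 (gT : finGroupType) (G : {group gT})
  (x : gT) (a b : int)
  (u : {rmorphism algC -> algC}) (r : nat) (i : Iirr G) :
  gal_image_klein G ->
  x \in G ->
  (* D = {x, x^a, x^b, x^ab} is a complete set of representatives
     of the four classes moved by the Galois action *)
  (forall C, gal_moved G C <->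
     C \in [:: (x ^: G)%g; (zexpg x a ^: G)%g; (zexpg x b ^: G)%g; (zexpg x (a * b)%R ^: G)%g]) ->
  uniq [:: (x ^: G)%g; (zexpg x a ^: G)%g; (zexpg x b ^: G)%g; (zexpg x (a * b)%R ^: G)%g] ->
  (* sigma in Gal(Q_n:Q), n = exp(G), given by zeta |-> zeta^r, realised as u *)
  coprime r (exponent G) ->
  (forall z : algC, z ^+ exponent G = 1 -> u z = z ^+ r) ->
  (* sigma . x = x^a up to conjugacy *)
  ((x ^+ r) ^: G)%g = (zexpg x a ^: G)%g ->
  cfAut u 'chi_i != 'chi_i ->
  (#|'C_G[x]%g|%:R : algC) =
    `|'chi_i x - 'chi_i (zexpg x a)| ^+ 2
    + `|'chi_i (zexpg x b) - 'chi_i (zexpg x (a * b))| ^+ 2.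
Proof.
move=> KG Gx moved_cl uniq_cl cop u_r xr chi_moved.
set y := zexpg x a in moved_cl uniq_cl xr *.
set z := zexpg x b in moved_cl uniq_cl *.
set w := zexpg x (a * b) in moved_cl uniq_cl *.
have [Gy Gz Gw] := And3 (groupZexpg a Gx) (groupZexpg b Gx) (groupZexpg (a * b) Gx).
have zr : ((z ^+ r) ^: G)%g = (w ^: G)%g.
  by rewrite -zexpgXr /w -zexpgM; exact: class_zexpg.
have x_moved : gal_moved G (x ^: G)%g by apply/moved_cl; rewrite inE eqxx.
have z_moved : gal_moved G (z ^: G)%g by apply/moved_cl; rewrite !inE eqxx !orbT.
have [r' cop' xr'] := gal_image_klein_transitive KG x_moved z_moved.
rewrite galclassE // in xr'.
have cent_y : #|'C_G[y]%g| = #|'C_G[x]%g|.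
  by apply: card_cent1_classX_coprime Gx cop _; apply/class_eqP; rewrite xr.
have cent_z : #|'C_G[z]%g| = #|'C_G[x]%g|.
  by apply: card_cent1_classX_coprime Gx cop' _; apply/class_eqP; rewrite xr'.
have cent_w : #|'C_G[w]%g| = #|'C_G[x]%g|.
  apply: (@card_cent1_classX_coprime _ _ _ _ (r' * r)) Gx _ _.
    by rewrite coprimeMl cop cop'.
  by apply/class_eqP; rewrite expgM -zr; apply: class_expg; rewrite xr'.
exact: (card_cent1_swapped_pairs u_r (gal_image_klein_galclassK KG cop)
  (gal_image_klein_card_moved KG cop) Gx Gy Gz Gw xr zr uniq_cl cent_y cent_z cent_w
  chi_moved).
Qed.
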